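(* Let $T\in(0,\infty)$ and let $A_a(t)\in\mathbb{R}^{N\times N}$, $B_a(t)\in\mathbb{R}^{N\times n_w}$, $Q(t)\in\mathbb{S}^N$, $S(t)\in\mathbb{R}^{N\times n_w}$, $R(t)\in\mathbb{S}^{n_w}$ be continuous functions of $t\in[0,T]$. For a differentiable $Y:[0,T]\to\mathbb{S}^N$ and $W:[0,T]\to\mathbb{S}^N$ write $RDE(t,Y)=W$ for $$\dot Y+A_a^\top Y+YA_a+Q-(YB_a+S)R^{-1}(YB_a+S)^\top=W\quad\text{at time }t.$$ Assume: 1. $R(t)\prec0$ for all $t\in[0,T]$; 2. $Y_0:[0,T]\to\mathbb{S}^N$ is differentiable with $Y_0(T)=0$ and $RDE(t,Y_0)=0$ for all $t\in[0,T]$; 3. $(\epsilon_k)_{k\ge1}$ are positive scalars with $\epsilon_k\ge\epsilon_{k+1}$ for all $k$ and $\lim_{k\to\infty}\epsilon_k=0$; 4. $Y_k:[0,T]\to\mathbb{S}^N$ ($k=1,2,\dots$) are differentiable with $Y_k(T)=0$ and $RDE(t,Y_k)=-\epsilon_k I$ for all $t\in[0,T]$. Then $\lim_{k\to\infty}\|Y_k(t)-Y_0(t)\|=0$ for all $t\in[0,T]$.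
   Context: $\mathbb{S}^n$ denotes the set of real symmetric $n\times n$ matrices; $\prec0$ means negative definite; $\|\cdot\|$ is the matrix induced 2-norm. *)

From HB Require Import structures.
From mathcomp Require Import all_boot all_order all_algebra.
From mathcomp Require Import all_classical all_reals all_analysis.
Set Implicit Arguments. Unset Strict Implicit. Unset Printing Implicit Defensive.
Import Order.TTheory GRing.Theory Num.Theory.
Import numFieldNormedType.Exports.
Local Open Scope classical_set_scope.
Local Open Scope ring_scope.

Definition symmetric_mx {R : realType} {n : nat} (M : 'M[R]_n) : Prop := M^T = M.

Definition neg_def {R : realType} {n : nat} (M : 'M[R]_n) : Prop :=
  symmetric_mx M /\ forall x : 'cV[R]_n, x != 0 -> (x^T *m M *m x) 0 0 < 0.

Definition eucl_norm {R : realType} {n : nat} (x : 'cV[R]_n) : R :=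
  Num.sqrt (\sum_(i < n) x i 0 ^+ 2).

Definition op2norm {R : realType} {m n : nat} (M : 'M[R]_(m, n)) : R :=
  sup [set eucl_norm (M *m x) | x in [set x : 'cV[R]_n | eucl_norm x <= 1]].

Definition has_deriv_on {R : realType} {n : nat} (T : R)
  (Y Yd : R -> 'M[R]_n) : Prop :=
  forall t, 0 <= t <= T ->
    (fun s => (s - t)^-1 *: (Y s - Y t)) @
      within (fun s => 0 <= s <= T /\ s != t) (nbhs t) --> Yd t.

Definition RDE {R : realType} {N nw : nat}
  (Aa : R -> 'M[R]_N) (Ba : R -> 'M[R]_(N, nw)) (Q : R -> 'M[R]_N)
  (S : R -> 'M[R]_(N, nw)) (Rm : R -> 'M[R]_nw)
  (t : R) (Yt Ydt : 'M[R]_N) : 'M[R]_N :=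
  Ydt + (Aa t)^T *m Yt + Yt *m Aa t + Q t
  - (Yt *m Ba t + S t) *m invmx (Rm t) *m (Yt *m Ba t + S t)^T.

(* D_k = Y_k - Y_0 vanishes at T, and subtracting the two Riccati equations
   gives |D_k'| <= L |D_k| + eps_k wherever |D_k| <= 1, with L depending only
   on bounds for A_a, B_a, S, R^-1 and Y_0 on the compact interval [0, T]
   (R^-1 stays bounded because inversion is continuous at invertible matrices).
   The barrier psi(t) = 2 eps_k exp((L + 1)(T - t)) decreases strictly faster
   than |D_k| can, so |D_k| <= psi on [0, T] once eps_k is small: at the last
   time where |D_k| = psi, |D_k| would have to drop below psi right after.
   Hence D_k(t) -> 0 in the entrywise norm, which bounds the induced 2-norm up
   to a factor N^2. *)

From HB Require Import structures.
From mathcomp Require Import all_boot all_order all_algebra.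
From mathcomp Require Import all_classical all_reals all_analysis.
From mathcomp Require Import ring lra.
Import Order.TTheory GRing.Theory Num.Theory.
Import numFieldNormedType.Exports.
Local Open Scope classical_set_scope.
Local Open Scope ring_scope.

Lemma subrACA (V : zmodType) (a b c d : V) : (a - b) - (c - d) = (a - c) - (b - d).
Proof. by rewrite !opprD !opprK addrACA. Qed.

Section MatrixNorm.
Context {R : realType}.

Lemma mx_norm_entry {m n} (M : 'M[R]_(m, n)) i j : `|M i j| <= `|M|.
Proof.
rewrite [leRHS]/Num.Def.normr /= mx_normrE.
exact: (le_bigmax _ (fun ij : 'I_m * 'I_n => `|M ij.1 ij.2|) (i, j)).
Qed.

Lemma mx_norm_le {m n} (M : 'M[R]_(m, n)) c :
  0 <= c -> (forall i j, `|M i j| <= c) -> `|M| <= c.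
Proof.
move=> c0 Mc; rewrite [leLHS]/Num.Def.normr /= mx_normrE.
by apply: bigmax_le => // -[i j] _; exact: Mc.
Qed.

Lemma mx_normT {m n} (M : 'M[R]_(m, n)) : `|M^T| = `|M|.
Proof.
apply/le_anti/andP; split; apply: mx_norm_le => // i j.
  by rewrite mxE; exact: mx_norm_entry.
by rewrite -(trmxK M) [X in `|X|]mxE trmxK; exact: mx_norm_entry.
Qed.

Lemma mx_norm_scalar {n} (a : R) : `|a%:M : 'M[R]_n| <= `|a|.
Proof. by apply: mx_norm_le => // i j; rewrite mxE; case: (i == j); rewrite ?normr0. Qed.

Lemma mx_normM {m n p} (M : 'M[R]_(m, n)) (P : 'M[R]_(n, p)) :
  `|M *m P| <= n%:R * `|M| * `|P|.
Proof.
apply: mx_norm_le => [|i j]; first by rewrite !mulr_ge0.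
rewrite mxE; apply: le_trans (ler_norm_sum _ _ _) _.
apply: le_trans (_ : \sum_(k < n) `|M| * `|P| <= _).
  by apply: ler_sum => k _; rewrite normrM ler_pM ?mx_norm_entry.
by rewrite sumr_const card_ord -mulrA mulr_natl.
Qed.

Lemma eucl_norm_entry {n} (x : 'cV[R]_n) i : eucl_norm x <= 1 -> `|x i 0| <= 1.
Proof.
rewrite /eucl_norm -[leRHS]sqrtr1 ler_sqrt // => x1.
rewrite -(@ler_pXn2r _ 2) ?nnegrE // expr1n.
rewrite real_normK ?num_real //; apply: le_trans x1.
rewrite (bigD1 i) //= lerDl; apply: sumr_ge0 => k _; exact: sqr_ge0.
Qed.

Lemma eucl_norm_le {n} (x : 'cV[R]_n) (c : R) :
  0 <= c -> (forall i, `|x i 0| <= c) -> eucl_norm x <= n%:R * c.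
Proof.
move=> c0 xc; have nc0 : 0 <= n%:R * c by rewrite mulr_ge0.
rewrite /eucl_norm -(ger0_norm nc0) -sqrtr_sqr ler_sqrt ?sqr_ge0 //.
apply: (@le_trans _ _ (\sum_(i < n) c ^+ 2)).
  by apply: ler_sum => i _; rewrite -real_normK ?num_real // ler_pXn2r ?nnegrE ?xc.
rewrite sumr_const card_ord -[_ *+ n]mulr_natl exprMn.
apply: ler_wpM2r; first exact: sqr_ge0.
by case: n {x xc nc0} => [|n]; rewrite ?expr2 ?mul0r // ler_peMl // ler1n.
Qed.

Lemma op2norm_bounds {m n} (M : 'M[R]_(m, n)) :
  0 <= op2norm M <= m%:R * (n%:R * `|M|).
Proof.
rewrite /op2norm; set E := [set _ | _ in _].
have E0 : E (eucl_norm (M *m 0)).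
  by exists 0 => //=; rewrite /eucl_norm big1 ?sqrtr0 // => i _; rewrite mxE expr0n.
have Eub : ubound E (m%:R * (n%:R * `|M|)).
  move=> _ [x x1 <-]; apply: eucl_norm_le; first by rewrite mulr_ge0.
  move=> i; rewrite mxE; apply: le_trans (ler_norm_sum _ _ _) _.
  apply: le_trans (_ : \sum_(j < n) `|M| <= _); last by rewrite sumr_const card_ord mulr_natl.
  apply: ler_sum => j _; rewrite normrM -[leRHS]mulr1.
  by apply: ler_pM; rewrite ?mx_norm_entry ?eucl_norm_entry.
have Esup : has_sup E by split; [exists (eucl_norm (M *m 0)) | exists (m%:R * (n%:R * `|M|))].
rewrite ge_sup ?andbT //; last by exists (eucl_norm (M *m 0)).
by apply: le_trans (sup_upper_bound Esup E0); exact: sqrtr_ge0.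
Qed.

Lemma mx_normM_le {m n p} (M : 'M[R]_(m, n)) (P : 'M[R]_(n, p)) a b :
  `|M| <= a -> `|P| <= b -> `|M *m P| <= n%:R * a * b.
Proof.
move=> Ma Pb; apply: le_trans (mx_normM M P) _.
by rewrite -!mulrA ler_wpM2l // ler_pM.
Qed.

Lemma op2norm_cvg0 {m n} {I : Type} {F : set_system I} {FF : Filter F} (M : I -> 'M[R]_(m, n)) :
  M @ F --> (0 : 'M[R]_(m, n)) -> (fun i => op2norm (M i)) @ F --> 0.
Proof.
move=> M0; apply: (@squeeze_cvgr _ _ _ _ (cst 0) (fun i => m%:R * (n%:R * `|M i|))).
- exact: filterE (fun i => op2norm_bounds (M i)).
- exact: cvg_cst.
- rewrite -(mulr0 m%:R) -(mulr0 n%:R) -(@normr0 _ 'M[R]_(m, n)).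
  by apply: cvgMl_tmp; apply: cvgMl_tmp; exact: cvg_norm.
Qed.
End MatrixNorm.

Section InverseContinuity.
Context {R : realType}.

Lemma cvg_mx_entries {T : Type} {F : set_system T} {FF : Filter F} {m n}
    (f : T -> 'M[R]_(m, n)) (M : 'M[R]_(m, n)) :
  (forall i j, f x i j @[x --> F] --> M i j) -> f @ F --> M.
Proof.
move=> fM; apply/cvgrPdist_lt => e e0.
have : \forall x \near F, forall ij : 'I_m * 'I_n, `|M ij.1 ij.2 - f x ij.1 ij.2| < e.
  by apply: filter_forall => ij; exact: cvgr_dist_lt (fM ij.1 ij.2) e e0.
apply: filterS => x Mfx; rewrite [ltLHS]/Num.Def.normr /= mx_normrE.
by apply: bigmax_lt => // ij _; rewrite !mxE.
Qed.

Lemma continuous_det {n} : continuous (fun A : 'M[R]_n => \det A).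
Proof.
rewrite /determinant; apply: continuous_big => [|s _ A]; first exact: add_continuous.
apply: (@cvgMl_tmp _ _ (nbhs A)).
apply: cvg_big => [|i _]; first exact: mul_continuous.
exact: coord_continuous.
Qed.

Lemma continuous_adj {n} : continuous (fun A : 'M[R]_n => \adj A).
Proof.
move=> A; apply: (@cvg_mx_entries _ (nbhs A) _) => i j.
rewrite mxE /cofactor; under eq_cvg do rewrite mxE /cofactor.
apply: (@cvgMl_tmp _ _ (nbhs A)).
apply: (@continuous_comp _ _ _ (fun B : 'M[R]_n => row' j (col' i B))); last exact: continuous_det.
apply: (@cvg_mx_entries _ (nbhs A) _) => k l.
by rewrite !mxE; under eq_cvg do rewrite !mxE; exact: coord_continuous.
Qed.

Lemma continuous_invmx {n} (A : 'M[R]_n) :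
  A \in unitmx -> {for A, continuous (fun B : 'M[R]_n => invmx B)}.
Proof.
rewrite unitmxE unitfE => detA.
have adjE : \forall B \near A, (\det B)^-1 *: \adj B = invmx B.
  near=> B; rewrite /invmx unitmxE unitfE ifT //.
  by near: B; exact: (cvgr_neq0 _ (continuous_det A) detA).
apply: cvg_trans (near_eq_cvg adjE) _.
rewrite /invmx unitmxE unitfE detA.
apply: cvgZ; last exact: continuous_adj.
exact: cvgV detA (continuous_det A).
Unshelve. all: by end_near.
Qed.

Lemma bounded_within_segment {V : normedModType R} {f : R -> V} {a b : R} :
  {within `[a, b], continuous f} ->
  exists2 M, 0 <= M & forall t, a <= t <= b -> `|f t| <= M.
Proof.
move=> cf; have [M [_ fM]] := compact_bounded (continuous_compact cf (@segment_compact _ a b)).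
exists (Num.max (M + 1) 0) => [|t tab]; first by rewrite le_max lexx orbT.
by apply: (fM (Num.max (M + 1) 0)); [rewrite lt_max ltrDl ltr01 | exists t; rewrite //= in_itv].
Qed.

Lemma invmx_bounded_within {n} {F : R -> 'M[R]_n} {a b : R} :
  {within `[a, b], continuous F} -> (forall t, a <= t <= b -> F t \in unitmx) ->
  exists2 M, 0 <= M & forall t, a <= t <= b -> `|invmx (F t)| <= M.
Proof.
move=> cF Funit; apply: (@bounded_within_segment _ (invmx \o F)).
apply: within_continuous_comp cF => _ /set_mem [t tab <-].
by apply/continuous_invmx/Funit; move: tab; rewrite /= in_itv.
Qed.

Lemma neg_def_unitmx {n} {M : 'M[R]_n} : neg_def M -> M \in unitmx.
Proof.
case=> _ Mneg; rewrite unitmxE unitfE; apply/negP => /det0P [v v0 vM].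
have := Mneg v^T; rewrite trmx_eq0 v0 trmxK vM mul0mx mxE ltxx.
by move/(_ isT).
Qed.
End InverseContinuity.

Section LastRoot.
Context {R : realType}.

Lemma at_right_within (D : set R) (c b : R) :
  c < b -> (forall s, c < s <= b -> D s) -> c^'+ `=>` within D (nbhs c).
Proof.
move=> cb Dcb A; rewrite /at_right /within /= => DA.
near=> s => cs; apply: (near DA s) => //; apply: Dcb; rewrite cs /=.
by apply: (near (lt_nbhsl_le cb) s) => //; exact: ltW.
Unshelve. all: by end_near.
Qed.

Lemma last_root {g : R -> R} {a b : R} : a <= b -> {within `[a, b], continuous g} ->
  0 <= g a -> g b < 0 ->
  exists c, [/\ a <= c < b, g c = 0 & forall s, c < s <= b -> g s < 0].
Proof.
move=> ab cg ga gb; set S := [set s | a <= s <= b /\ 0 <= g s].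
have Sa : S a by split; rewrite ?lexx ?ab.
have Ssup : has_sup S by split; [exists a | exists b => s [/andP[]]].
set c := sup S.
have ac : a <= c := sup_upper_bound Ssup Sa.
have cb : c <= b by apply: ge_sup; [exists a | move=> s [/andP[]]].
have gc : g s @[s --> within `[a, b] (nbhs c)] --> g c.
  by move/subspace_continuousP : cg; apply; rewrite /= in_itv /= ac cb.
have right s : c < s <= b -> g s < 0.
  move=> /andP[cs sb]; rewrite ltNge; apply/negP => gs.
  have := sup_upper_bound Ssup (conj _ gs); rewrite (le_trans ac (ltW cs)) sb.
  by move/(_ isT); rewrite leNgt cs.
have gc_ge0 : 0 <= g c.
  rewrite leNgt; apply/negP => gc0.
  have : \forall s \near within `[a, b] (nbhs c), g s < 0 by exact: cvgr_lt gc _ gc0.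
  rewrite near_withinE => /nbhs_ballP[d d0 dneg].
  have [s [/andP[sa sb] gs] cs] := sup_adherent d0 Ssup.
  have sc : s <= c := sup_upper_bound Ssup (conj (introT andP (conj sa sb)) gs).
  have := dneg s; rewrite /ball /= ger0_norm ?subr_ge0 // ltrBlDr -ltrBlDl in_itv /= sa sb.
  by move=> /(_ cs isT); rewrite ltNge gs.
have {}cb : c < b by rewrite lt_neqAle cb andbT; apply: contraTneq gc_ge0 => ->; rewrite -ltNge.
have gc_le0 : g c <= 0.
  rewrite leNgt; apply/negP => gc0.
  have gr : g s @[s --> c^'+] --> g c.
    apply: cvg_trans gc; apply: cvg_app; apply: at_right_within cb _ => s /andP[cs sb].
    by rewrite /= in_itv /= (le_trans ac (ltW cs)).
  have [s [gs cs sb]] : exists s, [/\ 0 < g s, c < s & s <= b].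
    apply: (@filter_ex _ c^'+); near=> s; split; near: s.
    - exact: cvgr_gt gr _ gc0.
    - exact: nbhs_right_gt.
    - exact: nbhs_right_le.
  by have := right s; rewrite cs sb ltNge (ltW gs) => /(_ isT).
by exists c; split; rewrite ?ac ?cb //; apply/eqP; rewrite eq_le gc_le0.
Unshelve. all: by end_near.
Qed.
End LastRoot.

Section Derivative.
Context {R : realType} {n : nat} {T : R}.
Implicit Types Y Yd : R -> 'M[R]_n.

Lemma has_deriv_onB {Y1 Y1d Y2 Y2d} :
  has_deriv_on T Y1 Y1d -> has_deriv_on T Y2 Y2d ->
  has_deriv_on T (fun t => Y1 t - Y2 t) (fun t => Y1d t - Y2d t).
Proof.
move=> dY1 dY2 t tT; apply: cvg_trans (cvgB (dY1 t tT) (dY2 t tT)); apply: near_eq_cvg.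
by apply: filterE => s; rewrite fctE -scalerBr subrACA.
Qed.

Lemma has_deriv_on_right {Y Yd t} : has_deriv_on T Y Yd -> 0 <= t < T ->
  (fun s => (s - t)^-1 *: (Y s - Y t)) @ t^'+ --> Yd t.
Proof.
move=> dY /andP[t0 tT]; apply: cvg_trans (dY t _); last by rewrite t0 ltW.
apply: cvg_app; apply: at_right_within tT _ => s /andP[ts sT].
by rewrite (le_trans t0 (ltW ts)) sT gt_eqF.
Qed.

Lemma has_deriv_on_right_lower {Y Yd t c} : has_deriv_on T Y Yd -> 0 <= t < T ->
  `|Yd t| < c -> \forall s \near t^'+, `|Y t| - (s - t) * c <= `|Y s|.
Proof.
move=> dY tT Ydc.
have qc : \forall s \near t^'+, `|(s - t)^-1 *: (Y s - Y t)| < c.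
  exact: cvgr_lt (cvg_norm (has_deriv_on_right dY tT)) _ Ydc.
near=> s.
have ts : t < s by near: s; exact: nbhs_right_gt.
have : `|(s - t)^-1 *: (Y s - Y t)| < c by near: s.
rewrite normrZ gtr0_norm ?invr_gt0 ?subr_gt0 // mulrC ltr_pdivrMr ?subr_gt0 // mulrC.
by have := lerB_dist (Y t) (Y s); rewrite distrC; lra.
Unshelve. all: by end_near.
Qed.

Lemma has_deriv_on_continuous {Y Yd} :
  has_deriv_on T Y Yd -> {within `[0, T], continuous Y}.
Proof.
move=> dY; apply/subspace_continuousP => t; rewrite /= in_itv /= => tT.
have dt : (s - t) *: ((s - t)^-1 *: (Y s - Y t))
    @[s --> within (fun s => 0 <= s <= T /\ s != t) (nbhs t)] --> (0 : 'M[R]_n).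
  rewrite -(scale0r (Yd t)); apply: cvgZ (dY t tT).
  by apply: cvg_within_filter; apply/subr_cvg0; exact: cvg_id.
apply/cvgrPdist_lt => e e0.
have := @cvgr_dist_lt _ _ _ _ (within_filter _ (nbhs_filter t)) _ _ dt _ e0.
rewrite !near_withinE; apply: filterS => s Ys; rewrite /= in_itv /= => sT.
have [->|st] := eqVneq s t; first by rewrite subrr normr0.
by move: (Ys (conj sT st)); rewrite scalerA mulfV ?subr_eq0 // scale1r sub0r normrN distrC.
Qed.
End Derivative.

Section Comparison.
Context {R : realType}.

Lemma expRN_mul1D_le1 (x : R) : expR (- x) * (1 + x) <= 1.
Proof. by rewrite expRN mulrC ler_pdivrMr ?expR_gt0 // mul1r expR_ge1Dx. Qed.

Lemma expR_decay_right {p M c : R} (t : R) : 0 < M -> 0 < c -> c < M * p ->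
  \forall s \near t^'+, p * expR (- (M * (s - t))) <= p - (s - t) * c.
Proof.
move=> M0 c0 cMp; have p0 : 0 < p by rewrite -(pmulr_rgt0 _ M0) (lt_trans c0).
have d0 : 0 < (M * p - c) / (c * M) by rewrite divr_gt0 ?subr_gt0 ?mulr_gt0.
near=> s; set h := s - t.
have h0 : 0 < h by rewrite subr_gt0; near: s; exact: nbhs_right_gt.
have hd : h <= (M * p - c) / (c * M).
  by rewrite lerBlDl; near: s; apply: nbhs_right_le; rewrite ltrDl.
have Mh0 : 0 < 1 + M * h by rewrite ltr_wpDr ?mulr_ge0 ?ltW.
rewrite -(ler_pM2r Mh0) -mulrA (le_trans (ler_wpM2l (ltW p0) (expRN_mul1D_le1 _))) // mulr1.
move: hd; rewrite ler_pdivlMr ?mulr_gt0 // => hd; nra.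
Unshelve. all: by end_near.
Qed.

Lemma continuous_expR_decay (k M T : R) : continuous (fun s => k * expR (M * (T - s))).
Proof.
move=> s; apply: (@continuousM _ _ (cst k) (expR \o (fun s => M * (T - s)))).
  exact: cst_continuous.
apply: continuous_comp; last exact: continuous_expR.
apply: (@continuousM _ _ (cst M) (fun s => T - s)); first exact: cst_continuous.
by apply: (@continuousB _ _ _ (cst T) id); [exact: cst_continuous | exact: cvg_id].
Qed.

Lemma backward_gronwall {n} {T L e : R} {D Dd : R -> 'M[R]_n} :
  0 <= L -> 0 < e -> has_deriv_on T D Dd -> D T = 0 ->
  (forall t, 0 <= t <= T -> `|D t| <= 1 -> `|Dd t| <= L * `|D t| + e) ->
  2 * e * expR ((L + 1) * T) <= 1 ->
  forall t, 0 <= t <= T -> `|D t| <= 2 * e * expR ((L + 1) * (T - t)).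
Proof.
move=> L0 e0 dD DT drift small t0 /andP[t00 t0T].
set M := L + 1; have M0 : 0 < M by rewrite ltr_wpDl.
set psi := fun s => 2 * e * expR (M * (T - s)).
have psi_mono s1 s2 : s1 <= s2 -> psi s2 <= psi s1.
  by move=> s12; rewrite ler_pM2l ?mulr_gt0 // ler_expR ler_pM2l // lerD2l lerN2.
rewrite -/(psi t0) leNgt; apply/negP => psi_lt.
have cg : {within `[t0, T], continuous (fun s => `|D s| - psi s)}.
  apply: within_continuousB; last exact/continuous_subspaceT/continuous_expR_decay.
  apply: (@within_continuous_comp _ _ _ _ D Num.norm) => [? _|]; first exact: norm_continuous.
  apply: continuous_subspaceW (has_deriv_on_continuous dD) => s.
  by rewrite /= !in_itv /= => /andP[/(le_trans t00) -> ->].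
have gt0 : 0 <= `|D t0| - psi t0 by rewrite subr_ge0 ltW.
have gT : `|D T| - psi T < 0 by rewrite DT normr0 sub0r oppr_lt0 mulr_gt0 ?expR_gt0 ?mulr_gt0.
have [tau [/andP[t0tau tauT] /eqP gtau gright]] := last_root t0T cg gt0 gT.
move: gtau; rewrite subr_eq0 => /eqP Dtau.
have tau0 : 0 <= tau := le_trans t00 t0tau.
have psi_ge : 2 * e <= psi tau.
  by have := psi_mono _ _ (ltW tauT); rewrite /psi subrr mulr0 expR0 mulr1.
have psi_le1 : psi tau <= 1 by have := psi_mono _ _ tau0; rewrite /psi subr0; lra.
have Ddtau : `|Dd tau| <= L * psi tau + e.
  by rewrite -Dtau; apply: drift; rewrite ?Dtau // tau0 ltW.
(* Any slope between the fastest decrease L psi + e of |D| and the decrease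
   M psi of the barrier will do; psi >= 2 e makes this interval nonempty. *)
set c := (L * psi tau + e + M * psi tau) / 2.
have Ddc : `|Dd tau| < c by rewrite /c /M; lra.
have cM : c < M * psi tau by rewrite /c /M; lra.
have c0 : 0 < c by have := mulr_ge0 L0 (le_trans (ltW (mulr_gt0 _ e0)) psi_ge); rewrite /c /M; lra.
have psiE s : psi s = psi tau * expR (- (M * (s - tau))).
  by rewrite /psi -!mulrA -expRD; congr (_ * (_ * expR _)); ring.
have [s [Ds psis taus sT]] : exists s, [/\ `|D tau| - (s - tau) * c <= `|D s|,
    psi s <= psi tau - (s - tau) * c, tau < s & s <= T].
  apply: (@filter_ex _ tau^'+); near=> s; split; near: s.
  - by apply: has_deriv_on_right_lower dD _ Ddc; rewrite tau0.
  - by apply: filterS (expR_decay_right tau M0 c0 cM) => s; rewrite [psi s]psiE.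
  - exact: nbhs_right_gt.
  - exact: nbhs_right_le.
by have := gright s; rewrite taus sT => /(_ isT); lra.
Unshelve. all: by end_near.
Qed.
End Comparison.

Section Riccati.
Context {R : realType} {N nw : nat}.
Implicit Types (A Q Y : 'M[R]_N) (B S : 'M[R]_(N, nw)) (Ri : 'M[R]_nw).

Definition riccati_rhs A Q B S Ri Y : 'M[R]_N :=
  A^T *m Y + Y *m A + Q - (Y *m B + S) *m Ri *m (Y *m B + S)^T.

Lemma RDE_rhsE (Aa : R -> 'M[R]_N) (Ba : R -> 'M[R]_(N, nw)) (Q : R -> 'M[R]_N)
    (S : R -> 'M[R]_(N, nw)) (Rm : R -> 'M[R]_nw) t Y Yd :
  RDE Aa Ba Q S Rm t Y Yd = Yd + riccati_rhs (Aa t) (Q t) (Ba t) (S t) (invmx (Rm t)) Y.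
Proof. by rewrite /RDE /riccati_rhs !addrA. Qed.

Lemma quad_formB (X Z : 'M[R]_(N, nw)) Ri :
  X *m Ri *m X^T - Z *m Ri *m Z^T = (X - Z) *m Ri *m X^T + Z *m Ri *m (X - Z)^T.
Proof. by rewrite !mulmxBl linearB /= mulmxBr addrA subrK. Qed.

Lemma riccati_rhsB A Q B S Ri Y1 Y2 :
  riccati_rhs A Q B S Ri Y1 - riccati_rhs A Q B S Ri Y2 =
  A^T *m (Y1 - Y2) + (Y1 - Y2) *m A -
  ((Y1 - Y2) *m B *m Ri *m (Y1 *m B + S)^T + (Y2 *m B + S) *m Ri *m ((Y1 - Y2) *m B)^T).
Proof.
have KB : (Y1 *m B + S) - (Y2 *m B + S) = (Y1 - Y2) *m B.
  by rewrite opprD addrACA subrr addr0 mulmxBl.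
rewrite -KB -quad_formB /riccati_rhs mulmxBr mulmxBl subrACA.
by rewrite [in LHS]opprD addrACA subrr addr0 opprD addrACA.
Qed.

Lemma RDE_derivB {Aa : R -> 'M[R]_N} {Ba : R -> 'M[R]_(N, nw)} {Q : R -> 'M[R]_N}
    {S : R -> 'M[R]_(N, nw)} {Rm : R -> 'M[R]_nw} {t Y0 Y0d Y1 Y1d P} :
  RDE Aa Ba Q S Rm t Y1 Y1d = P -> RDE Aa Ba Q S Rm t Y0 Y0d = 0 ->
  let F := riccati_rhs (Aa t) (Q t) (Ba t) (S t) (invmx (Rm t)) in
  Y1d - Y0d = P - (F Y1 - F Y0).
Proof.
rewrite !RDE_rhsE /=; move: (riccati_rhs _ _ _ _ _ Y0) (riccati_rhs _ _ _ _ _ Y1) => F0 F1.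
move=> <- /eqP; rewrite addr_eq0 => /eqP ->.
by rewrite opprK opprB addrA addrAC addrK.
Qed.

Lemma riccati_rhs_lipschitz A Q B S Ri Y1 Y2 (a b s r rho : R) :
  `|A| <= a -> `|B| <= b -> `|S| <= s -> `|Ri| <= r -> `|Y1| <= rho -> `|Y2| <= rho ->
  `|riccati_rhs A Q B S Ri Y1 - riccati_rhs A Q B S Ri Y2| <=
  (2 * N%:R * a + 2 * nw%:R ^+ 2 * N%:R * b * r * (N%:R * rho * b + s)) * `|Y1 - Y2|.
Proof.
move=> Aa Bb Ss Rir Y1rho Y2rho; rewrite riccati_rhsB.
set D := Y1 - Y2; set k := N%:R * rho * b + s.
have K1k : `|Y1 *m B + S| <= k by rewrite (le_trans (ler_normD _ _)) ?lerD ?mx_normM_le.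
have K2k : `|Y2 *m B + S| <= k by rewrite (le_trans (ler_normD _ _)) ?lerD ?mx_normM_le.
have DB : `|D *m B| <= N%:R * `|D| * b by exact: mx_normM_le.
have AD : `|A^T *m D| <= N%:R * a * `|D| by rewrite mx_normM_le ?mx_normT.
have DA : `|D *m A| <= N%:R * `|D| * a by exact: mx_normM_le.
have Q1 : `|D *m B *m Ri *m (Y1 *m B + S)^T| <= nw%:R * (nw%:R * (N%:R * `|D| * b) * r) * k.
  by rewrite !mx_normM_le ?mx_normT.
have Q2 : `|(Y2 *m B + S) *m Ri *m (D *m B)^T| <= nw%:R * (nw%:R * k * r) * (N%:R * `|D| * b).
  by rewrite !mx_normM_le ?mx_normT.
apply: (le_trans (ler_normB _ _)); apply: (le_trans (lerD (ler_normD _ _) (ler_normD _ _))).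
lra.
Qed.

Lemma RDE_drift_bound {T : R} {Aa : R -> 'M[R]_N} {Ba : R -> 'M[R]_(N, nw)}
    {Q : R -> 'M[R]_N} {S : R -> 'M[R]_(N, nw)} {Rm : R -> 'M[R]_nw} {Y0 Y0d : R -> 'M[R]_N} :
  {within `[0, T], continuous Aa} -> {within `[0, T], continuous Ba} ->
  {within `[0, T], continuous S} -> {within `[0, T], continuous Rm} ->
  (forall t, 0 <= t <= T -> Rm t \in unitmx) -> has_deriv_on T Y0 Y0d ->
  (forall t, 0 <= t <= T -> RDE Aa Ba Q S Rm t (Y0 t) (Y0d t) = 0) ->
  exists2 L, 0 <= L & forall t Y Yd e, 0 <= t <= T -> 0 <= e ->
    RDE Aa Ba Q S Rm t Y Yd = - e%:M -> `|Y - Y0 t| <= 1 ->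
    `|Yd - Y0d t| <= L * `|Y - Y0 t| + e.
Proof.
move=> cA cB cS cR Runit dY0 rde0.
have [a a0 Aa_le] := bounded_within_segment cA.
have [b b0 Ba_le] := bounded_within_segment cB.
have [s s0 S_le] := bounded_within_segment cS.
have [r r0 Ri_le] := invmx_bounded_within cR Runit.
have [y y0 Y0_le] := bounded_within_segment (has_deriv_on_continuous dY0).
(* The Lipschitz constant of riccati_rhs on the ball of radius y + 1, which
   contains Y whenever |Y - Y0 t| <= 1. *)
exists (2 * N%:R * a + 2 * nw%:R ^+ 2 * N%:R * b * r * (N%:R * (y + 1) * b + s)).
  by rewrite ?(addr_ge0, mulr_ge0, exprn_ge0, ler0n).
move=> t Y Yd e tT e0 rdeY D1; rewrite (RDE_derivB rdeY (rde0 t tT)) /=.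
apply: le_trans (ler_normB _ _) _; rewrite addrC lerD //.
  apply: riccati_rhs_lipschitz; rewrite ?Aa_le ?Ba_le ?S_le ?Ri_le ?Y0_le //.
    by rewrite -(subrK (Y0 t) Y) (le_trans (ler_normD _ _)) // addrC lerD ?Y0_le.
  by rewrite (le_trans (Y0_le t tT)) ?lerDl.
by rewrite normrN (le_trans (mx_norm_scalar _)) // ger0_norm.
Qed.
End Riccati.

Theorem lemmaA2 (R : realType) (N nw : nat) (T : R)
  (Aa : R -> 'M[R]_N) (Ba : R -> 'M[R]_(N, nw)) (Q : R -> 'M[R]_N)
  (S : R -> 'M[R]_(N, nw)) (Rm : R -> 'M[R]_nw)
  (Y0 Y0d : R -> 'M[R]_N) (eps : nat -> R) (Y Yd : nat -> R -> 'M[R]_N) :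
  0 < T ->
  {within `[0, T], continuous Aa} ->
  {within `[0, T], continuous Ba} ->
  {within `[0, T], continuous Q} ->
  {within `[0, T], continuous S} ->
  {within `[0, T], continuous Rm} ->
  (forall t, 0 <= t <= T -> symmetric_mx (Q t)) ->
  (forall t, 0 <= t <= T -> symmetric_mx (Rm t)) ->
  (* 1. *)
  (forall t, 0 <= t <= T -> neg_def (Rm t)) ->
  (* 2. *)
  (forall t, 0 <= t <= T -> symmetric_mx (Y0 t)) ->
  has_deriv_on T Y0 Y0d ->
  Y0 T = 0 ->
  (forall t, 0 <= t <= T -> RDE Aa Ba Q S Rm t (Y0 t) (Y0d t) = 0) ->
  (* 3. *)
  (forall k, (0 < k)%N -> 0 < eps k) ->
  (forall k, (0 < k)%N -> eps (k.+1) <= eps k) ->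
  eps @ \oo --> 0 ->
  (* 4. *)
  (forall k, (0 < k)%N -> forall t, 0 <= t <= T -> symmetric_mx (Y k t)) ->
  (forall k, (0 < k)%N -> has_deriv_on T (Y k) (Yd k)) ->
  (forall k, (0 < k)%N -> Y k T = 0) ->
  (forall k, (0 < k)%N -> forall t, 0 <= t <= T ->
     RDE Aa Ba Q S Rm t (Y k t) (Yd k t) = - (eps k)%:M) ->
  forall t, 0 <= t <= T ->
    (fun k => op2norm (Y k t - Y0 t)) @ \oo --> (0 : R).
Proof.
(* Q cancels from the difference of the two equations. *)
move=> _ cA cB _ cS cR _ _ negR _ dY0 Y0T rde0 eps_gt0 _ eps0 _ dY YT rdeY t tT.
have [L L0 drift] := RDE_drift_bound cA cB cS cR (fun u uT => neg_def_unitmx (negR u uT))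
  dY0 rde0.
set C := 2 * expR ((L + 1) * T); have C0 : 0 < C by rewrite mulr_gt0 ?expR_gt0.
apply/op2norm_cvg0/norm_cvg0P.
apply: (@squeeze_cvgr _ _ _ _ (cst 0) (fun k => C * eps k)); last 2 first.
- exact: cvg_cst.
- by rewrite -(mulr0 C); apply: cvgMl_tmp.
near=> k; have k0 : (0 < k)%N by near: k; exact: nbhs_infty_gt.
have ek := eps_gt0 k k0; rewrite normr_ge0 /=.
have DT : Y k T - Y0 T = 0 by rewrite YT // Y0T subrr.
have {}drift u uT := drift u _ _ _ uT (ltW ek) (rdeY k k0 u uT).
apply: le_trans (backward_gronwall L0 ek (has_deriv_onB (dY k k0) dY0) DT drift _ _ tT) _.
  rewrite mulrAC -/C mulrC -ler_pdivlMr // mul1r.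
  by near: k; apply: cvgr_le eps0 _ _; rewrite invr_gt0.
rewrite mulrAC ler_pM2r // ler_pM2l // ler_expR ler_pM2l ?ltr_wpDl //.
by rewrite gerBl; case/andP: tT.
Unshelve. all: by end_near.
Qed.
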